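(* Let $n\ge 2$. For a prime $p$, let $X_p$ be the set of matrices in $\mathrm{SL}(n,\mathbb{F}_p)$ whose characteristic polynomial has a monic factor over $\mathbb{F}_p$ of degree between $1$ and $n-1$ with constant term $1$. Then $|X_p|=o(p^{n^2-1})$ as $p\to\infty$. *)

From HB Require Import structures.
From mathcomp Require Import all_boot all_order all_algebra.
From mathcomp Require Import boolp.
Set Implicit Arguments. Unset Strict Implicit. Unset Printing Implicit Defensive.
Import GRing.Theory Num.Theory.
Local Open Scope ring_scope.

Definition has_unit_const_factor (n p : nat) (A : 'M['F_p]_n) : Prop :=
  exists q : {poly 'F_p},
    [/\ q \is monic, q %| char_poly A,
        (1 <= (size q).-1)%N, ((size q).-1 <= n.-1)%N & q`_0 = 1].

Definition Xp (n p : nat) : {set 'M['F_p]_n} :=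
  [set A : 'M['F_p]_n | (\det A == 1) && `[< has_unit_const_factor A >]].

(* Let q = |F| and e0 = (1, 0, ..., 0). The matrices having e0 as a cyclic
   vector are exactly the conjugates P^-1 C(c) P of companion matrices, where
   P is invertible with first row e0 and c is the last row of C(c); the pair
   (P, c) is unique, and the conjugate has the characteristic polynomial and
   determinant of C(c). If G is the set of such P, then
   |GL_n| = (q^n - 1) |G| = (q - 1) |SL_n| and exactly q^(n-1) rows c give
   determinant 1, so at most |G| q^(n-1) / (q - 1) matrices of SL_n lack e0 as
   a cyclic vector. For a cyclic matrix of X, the row c is determined by the
   degree d of the factor and the inner coefficients of the factor (constant
   term 1) and of its cofactor (constant term (-1)^n): at most n q^(n-2) rows.
   Hence |X| (q - 1) <= (n + 1) |G| q^(n-1), and |G| (q^n - 1) <= q^(n^2)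
   yields |X| <= 4 (n + 1) q^(n^2 - 2). *)

From HB Require Import structures.
From mathcomp Require Import all_boot all_order all_algebra zify boolp.
Set Implicit Arguments. Unset Strict Implicit. Unset Printing Implicit Defensive.
Import Order.TTheory GRing.Theory Num.Theory.
Local Open Scope ring_scope.

Lemma card_uniform_fibers (T U : finType) (D : {set T}) (f : T -> U)
    (V : {set U}) (u0 : U) :
  {in D, forall x, f x \in V} ->
  (forall u, u \in V -> exists2 h : T -> T, injective h &
     forall x, (h x \in D) && (f (h x) == u) = (x \in D) && (f x == u0)) ->
  #|D| = (#|V| * #|[set x in D | f x == u0]|)%N.
Proof.
move=> DV fibV; rewrite -sum1_card (partition_big f (mem V)) //= -sum_nat_const.
apply: eq_bigr => u /fibV[h h_inj hE]; rewrite sum1_card.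
have -> : [set x in D | f x == u0] = h @^-1: [set x in D | f x == u].
  by apply/setP => x; rewrite !inE hE.
by rewrite card_preimset //; apply: eq_card => x; rewrite inE.
Qed.

Lemma char_poly_castmx (R : comNzRingType) m n (e : m = n) (A : 'M[R]_m) :
  char_poly (castmx (e, e) A) = char_poly A.
Proof. by case: n / e; rewrite castmx_id. Qed.

Section Companion.
Variables (R : comNzRingType) (m : nat).
Local Notation n := m.+1.

Definition compmx (c : 'rV[R]_n) : 'M[R]_n :=
  \matrix_(i, j) if i == m :> nat then c 0 j else (i.+1 == j :> nat)%:R.

Definition compmx_poly (c : 'rV[R]_n) : {poly R} :=
  'X^n - \poly_(j < n) c 0 (inord j).

Lemma size_compmx_poly c : size (compmx_poly c) = n.+1.
Proof. by rewrite size_polyDl ?size_polyXn // size_polyN ltnS size_poly. Qed.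

Lemma compmx_poly_monic c : compmx_poly c \is monic.
Proof.
by rewrite monicE lead_coefDl ?lead_coefXn // size_polyN size_polyXn ltnS size_poly.
Qed.

Lemma coef_compmx_poly c (j : 'I_n) : (compmx_poly c)`_j = - c 0 j.
Proof.
by rewrite coefB coefXn coef_poly ltn_ord inord_val (ltn_eqF (ltn_ord j)) sub0r.
Qed.

Lemma char_poly_compmx c : char_poly (compmx c) = compmx_poly c.
Proof.
have e : (size (compmx_poly c)).-1 = n by rewrite size_compmx_poly.
suff -> : compmx c = castmx (e, e) (companionmx (compmx_poly c)).
  by rewrite char_poly_castmx companionmxK // compmx_poly_monic.
apply/matrixP => i j; rewrite castmxE !mxE /= size_compmx_poly.
by case: ifP => // _; rewrite coef_compmx_poly opprK.
Qed.

Lemma det_compmx c : \det (compmx c) = (-1) ^+ m * c 0 0.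
Proof.
have := char_poly_det (compmx c).
rewrite char_poly_compmx (coef_compmx_poly c ord0) exprS mulN1r mulNr.
by move=> /oppr_inj ->; rewrite signrMK.
Qed.

Lemma delta0_mul_compmxX c k (lt_k_n : (k < n)%N) :
  (delta_mx 0 0 : 'rV[R]_n) *m compmx c ^+ k = delta_mx 0 (Ordinal lt_k_n).
Proof.
elim: k lt_k_n => [|k IHk] lt_k_n.
  by rewrite expr0 mulmx1; congr delta_mx; apply: val_inj.
rewrite exprSr -mulmxE mulmxA (IHk (ltnW lt_k_n)) -rowE; apply/rowP => j.
by rewrite !mxE /= (ltn_eqF (lt_k_n : (k < m)%N)) eq_sym.
Qed.

End Companion.

Section Conjugation.
Variables (R : comUnitRingType) (n : nat) (P : 'M[R]_n).
Hypothesis P_unit : P \in unitmx.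

Lemma char_poly_conj (A : 'M[R]_n) : char_poly (invmx P *m A *m P) = char_poly A.
Proof.
have char_mx_conj : char_poly_mx (invmx P *m A *m P) =
    map_mx polyC (invmx P) *m char_poly_mx A *m map_mx polyC P.
  rewrite /char_poly_mx mulmxBr mulmxBl !map_mxM; congr (_ - _).
  by rewrite mul_mx_scalar -scalemxAl -map_mxM mulVmx // map_mx1 scalemx1.
rewrite /char_poly char_mx_conj !det_mulmx mulrC mulrA -det_mulmx -map_mxM.
by rewrite mulmxV // map_mx1 det1 mul1r.
Qed.

Lemma det_conj (A : 'M[R]_n) : \det (invmx P *m A *m P) = \det A.
Proof. by rewrite !det_mulmx det_inv mulrC mulrA mulrV ?mul1r. Qed.

Lemma conj_mxX (A : 'M[R]_n) k :
  (invmx P *m A *m P) ^+ k = invmx P *m A ^+ k *m P.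
Proof.
elim: k => [|k IHk]; first by rewrite !expr0 mulmx1 mulVmx.
by rewrite !exprSr IHk -!mulmxE !mulmxA mulmxK.
Qed.

End Conjugation.

Section CompanionConjugates.
Variables (R : comUnitRingType) (m : nat).
Local Notation n := m.+1.
Local Notation e0 := (delta_mx 0 0 : 'rV[R]_n).

Definition conj_compmx (P : 'M[R]_n) (c : 'rV[R]_n) := invmx P *m compmx c *m P.

Lemma row_conj_compmx P c (i : 'I_n) : P \in unitmx -> row 0 P = e0 ->
  row i P = e0 *m conj_compmx P c ^+ i.
Proof.
move=> P_unit P0; rewrite conj_mxX // !mulmxA.
have -> : e0 *m invmx P = e0 by rewrite -{1}P0 rowE mulmxK.
by rewrite (delta0_mul_compmxX c (ltn_ord i)) -rowE; congr row; apply: val_inj.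
Qed.

Lemma conj_compmx_inj P1 c1 P2 c2 :
    P1 \in unitmx -> row 0 P1 = e0 -> P2 \in unitmx -> row 0 P2 = e0 ->
  conj_compmx P1 c1 = conj_compmx P2 c2 -> P1 = P2 /\ c1 = c2.
Proof.
move=> P1_unit P1_0 P2_unit P2_0 eq12.
have eqP12 : P1 = P2.
  apply/row_matrixP => i.
  by rewrite (row_conj_compmx c1) // eq12 -row_conj_compmx.
split=> //; apply/rowP => j; subst P2.
have compmxE c : compmx c = P1 *m conj_compmx P1 c *m invmx P1.
  by rewrite /conj_compmx !mulmxA mulmxV // mul1mx mulmxK.
by have /matrixP/(_ ord_max j) := compmxE c1; rewrite eq12 -compmxE !mxE eqxx.
Qed.

End CompanionConjugates.

Definition has_const1_factor (R : idomainType) (n : nat) (f : {poly R}) : Prop :=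
  exists g : {poly R},
    [/\ g \is monic, g %| f, (1 <= (size g).-1)%N, ((size g).-1 <= n.-1)%N & g`_0 = 1].

Lemma monic_XnD_poly (R : nzRingType) (p : {poly R}) d :
  p \is monic -> size p = d.+1 -> p = 'X^d + \poly_(i < d) p`_i.
Proof.
move=> p_monic sz_p; apply/polyP => i; rewrite coefD coefXn coef_poly.
case: (ltngtP i d) => [lt_id | lt_di | ->]; rewrite ?add0r ?addr0 //.
  by rewrite nth_default // sz_p.
by rewrite -(monicP p_monic) /lead_coef sz_p.
Qed.

Section FactorRows.
Variables (F : finFieldType) (k : nat).
Local Notation n := k.+2.

(* The tuple s lists the d - 1 inner coefficients of a monic factor of degree d
   with constant term 1, followed by the n - d - 1 inner coefficients of its
   monic cofactor, whose constant term the determinant condition forces to be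
   (-1)^n. *)
Definition param_factor (d : nat) (s : k.-tuple F) : {poly F} :=
  'X^d + \poly_(i < d) (if i == 0 then 1 else s`_i.-1).

Definition param_cofactor (d : nat) (s : k.-tuple F) : {poly F} :=
  'X^(n - d) + \poly_(j < n - d) (if j == 0 then (-1) ^+ n else s`_(d + j - 2)).

Definition param_row (x : 'I_n * k.-tuple F) : 'rV[F]_n :=
  \row_j - (param_factor x.1 x.2 * param_cofactor x.1 x.2)`_j.

Definition factor_rows := [set c : 'rV[F]_n |
  (\det (compmx c) == 1) && `[< has_const1_factor n (compmx_poly c) >]].

Lemma factor_rows_sub : factor_rows \subset [set param_row x | x in setT].
Proof.
apply/subsetP => c; rewrite inE => /andP[/eqP det1].
case/asboolP => g [g_monic g_dvd d_gt0 d_le g0].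
set d := (size g).-1 in d_gt0 d_le.
have sz_g : size g = d.+1 by rewrite /d in d_gt0 *; lia.
have lt_dn : (d < n)%N by rewrite ltnS.
set h := compmx_poly c %/ g.
have hg : h * g = compmx_poly c := divpK g_dvd.
have h_monic : h \is monic by rewrite -(monicMr _ g_monic) hg compmx_poly_monic.
have sz_h : size h = (n - d).+1.
  by rewrite size_divp ?monic_neq0 // size_compmx_poly sz_g; lia.
have h0 : h`_0 = (-1) ^+ n.
  have := char_poly_det (compmx c).
  by rewrite char_poly_compmx det1 mulr1 -hg coefM big_ord1 g0 mulr1.
pose s := [tuple if (i.+1 < d)%N then g`_i.+1 else h`_(i.+2 - d) | i < k].
have sE j (lt_jk : (j < k)%N) : s`_j = if (j.+1 < d)%N then g`_j.+1 else h`_(j.+2 - d).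
  exact: (nth_mktuple _ _ (Ordinal lt_jk)).
have -> : c = param_row (Ordinal lt_dn, s); last by rewrite imset_f.
rewrite /param_row /=.
have -> : param_factor d s = g.
  rewrite [RHS](monic_XnD_poly g_monic sz_g); congr (_ + _).
  apply: eq_poly => i lt_id; case: eqP => [-> // | i_neq0].
  by rewrite sE ?prednK ?lt_id //; lia.
have -> : param_cofactor d s = h.
  rewrite [RHS](monic_XnD_poly h_monic sz_h); congr (_ + _).
  apply: eq_poly => j lt_jnd; case: eqP => [-> // | j_neq0].
  by rewrite sE; [case: ifP => [? | _]; [lia | congr h`_ _; lia] | lia].
by apply/rowP => j; rewrite mxE mulrC hg coef_compmx_poly opprK.
Qed.

Lemma card_factor_rows : (#|factor_rows| <= n * #|F| ^ k)%N.
Proof.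
apply: leq_trans (subset_leq_card factor_rows_sub) _.
by apply: leq_trans (leq_imset_card _ _) _; rewrite cardsT card_prod card_ord card_tuple.
Qed.

End FactorRows.

Section Counting.
Variables (F : finFieldType) (m : nat).
Local Notation n := m.+1.
Local Notation q := #|F|.
Local Notation e0 := (delta_mx 0 0 : 'rV[F]_n).

Definition GLmx := [set P : 'M[F]_n | P \in unitmx].
Definition SLmx := [set P : 'M[F]_n | \det P == 1].
Definition GLmx_e0 := [set P in GLmx | row 0 P == e0].
Definition det1_rows := [set c : 'rV[F]_n | \det (compmx c) == 1].
Definition cyclic_e0 := [set conj_compmx x.1 x.2 | x in setX GLmx_e0 [set: 'rV[F]_n]].

Lemma card_rV : #|{: 'rV[F]_n}| = (q ^ n)%N.
Proof. by rewrite card_mx mul1n. Qed.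

Lemma unitmx_delta0_mul (u : 'rV[F]_n) : u != 0 -> exists2 g, g \in unitmx & e0 *m g = u.
Proof.
move=> u_neq0; have := mulmx_ebase u; rewrite rank_rV u_neq0.
set a := col_ebase u; set B := row_ebase u => u_ebase.
have a_unit : a 0 0 \is a GRing.unit.
  by have := col_ebase_unit u; rewrite unitmxE det_mx11.
exists (a 0 0 *: B); first by rewrite unitmxZ // row_ebase_unit.
rewrite -{}u_ebase {2}[a]mx11_scalar mul_scalar_mx -scalemxAl -scalemxAr.
congr (_ *: (_ *m _)); apply/matrixP => i j.
by rewrite [i]ord1 !mxE /= andbT eq_sym.
Qed.

Lemma card_GLmx : #|GLmx| = ((q ^ n).-1 * #|GLmx_e0|)%N.
Proof.
rewrite -card_rV -(cardsC1 0).
apply: (card_uniform_fibers (f := row 0)) => [P | u].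
  rewrite !inE unitmxE unitfE; apply: contra => /eqP P0.
  apply/det0P; exists e0; last by rewrite -rowE P0.
  by apply/eqP => /matrixP/(_ 0 0)/eqP; rewrite !mxE eqxx oner_eq0.
rewrite !inE => u_neq0; have [g g_unit <-] := unitmx_delta0_mul u_neq0.
have rV_inj : injective (mulmx^~ g : 'rV[F]_n -> 'rV[F]_n) := can_inj (mulmxK g_unit).
exists (mulmx^~ g) => [|P]; first exact: can_inj (mulmxK g_unit).
by rewrite /GLmx !inE unitmx_mul g_unit andbT row_mul (inj_eq rV_inj).
Qed.

Lemma card_GLmx_SLmx : #|GLmx| = (q.-1 * #|SLmx|)%N.
Proof.
have -> : #|SLmx| = #|[set P in GLmx | \det P == 1]|.
  apply: eq_card => P; rewrite /GLmx /SLmx !inE unitmxE.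
  by case: eqP => [->|]; rewrite ?unitr1 ?andbF.
rewrite -(cardsC1 0); apply: (card_uniform_fibers (f := determinant)) => [P | v].
  by rewrite !inE unitmxE unitfE.
rewrite !inE => v_neq0; pose g := diag_mx (\row_(i < n) if i == 0 then v else 1).
have det_g : \det g = v.
  rewrite det_diag (bigD1 0) //= big1 ?mulr1 => [|i /negbTE i_neq0]; rewrite mxE ?i_neq0 //.
have g_unit : g \in unitmx by rewrite unitmxE det_g unitfE.
exists (mulmx^~ g) => [|P]; first exact: can_inj (mulmxK g_unit).
rewrite !inE unitmx_mul g_unit andbT det_mulmx det_g.
by rewrite -{2}[v]mul1r (inj_eq (mulIf v_neq0)).
Qed.

Lemma card_det1_rows : #|det1_rows| = (q ^ m)%N.
Proof.
have q_gt0 : (0 < q)%N := ltnW (card_finNzRing_gt1 F).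
apply/eqP; rewrite -(eqn_pmul2l q_gt0) -expnS -card_rV.
have -> : det1_rows = [set c in [set: 'rV[F]_n] | c 0 0 == (-1) ^+ m].
  apply/setP => c; rewrite !inE det_compmx.
  by rewrite (can2_eq (signrMK m) (signrMK m)) mulr1.
rewrite -[X in _ == X]cardsT (card_uniform_fibers (D := setT) (V := setT)
  (f := fun c : 'rV[F]_n => c 0 0) (u0 := (-1) ^+ m)) ?cardsT // => v _.
exists (fun c => c + (v - (-1) ^+ m) *: delta_mx 0 0) => [|c]; first exact: addIr.
by rewrite !inE !mxE eqxx mulr1 addrCA -{2}[v]addr0 (inj_eq (addrI v)) subr_eq0.
Qed.

Lemma card_SLmx_cyclic : (#|GLmx_e0| * q ^ m <= #|SLmx :&: cyclic_e0|)%N.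
Proof.
rewrite -card_det1_rows -cardsX -(card_in_imset (f := fun x => conj_compmx x.1 x.2)).
  apply/subset_leq_card/subsetP => _ /imsetP[[P c] /setXP[PGL c1] ->].
  move: (PGL) c1; rewrite !inE => /andP[P_unit _] /eqP det1.
  rewrite det_conj // det1 eqxx; apply/imsetP; exists (P, c) => //.
  by rewrite inE PGL in_setT.
move=> [P1 c1] [P2 c2] /setXP[+ _] /setXP[+ _]; rewrite !inE /=.
by move=> /andP[P1_unit /eqP P1_0] /andP[P2_unit /eqP P2_0] /conj_compmx_inj[] // -> ->.
Qed.

Lemma card_SLmx_noncyclic : (#|SLmx :\: cyclic_e0| * q.-1 <= #|GLmx_e0| * q ^ m)%N.
Proof.
have q_gt0 : (0 < q)%N := ltnW (card_finNzRing_gt1 F).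
have card_GL := card_GLmx.
rewrite card_GLmx_SLmx -(cardsID cyclic_e0 SLmx) expnS in card_GL.
move: card_GL (leq_mul (leqnn q.-1) card_SLmx_cyclic).
case: q q_gt0 => // r _ /=; move: (r.+1 ^ m)%N #|GLmx_e0| => Q A.
move: (#|_ :&: _|) (#|_ :\: _|) => Sc Sn; nia.
Qed.

Lemma card_GLmx_e0_le : (#|GLmx_e0| * (q ^ n).-1 <= q ^ (n * n))%N.
Proof. by rewrite mulnC -card_GLmx -(card_mx F n n) max_card. Qed.

End Counting.

Section Bound.
Variables (F : finFieldType) (k : nat).
Local Notation n := k.+2.
Local Notation q := #|F|.
Local Notation cyc := (cyclic_e0 F k.+1).

Definition Xmx := [set A : 'M[F]_n |
  (\det A == 1) && `[< has_const1_factor n (char_poly A) >]].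

Lemma card_Xmx_cyclic :
  (#|Xmx :&: cyc| <= #|GLmx_e0 F k.+1| * #|factor_rows F k|)%N.
Proof.
rewrite -cardsX; apply: leq_trans (leq_imset_card (fun x => conj_compmx x.1 x.2) _).
apply/subset_leq_card/subsetP => B /setIP[+ /imsetP[[P c] /setXP[PGL _] B_eq]].
move: (PGL); rewrite B_eq !inE /conj_compmx /= => /andP[P_unit _].
rewrite det_conj // char_poly_conj // char_poly_compmx => c_fact.
by apply/imsetP; exists (P, c); rewrite // in_setX PGL inE.
Qed.

Lemma card_Xmx_mul_le : (#|Xmx| * q.-1 <= n.+1 * (#|GLmx_e0 F k.+1| * q ^ k.+1))%N.
Proof.
have card_X : (#|Xmx| <= #|Xmx :&: cyc| + #|SLmx F k.+1 :\: cyc|)%N.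
  rewrite -(cardsID cyc Xmx) leq_add2l subset_leq_card //.
  by apply/subsetP => B; rewrite !inE => /andP[-> /andP[-> _]].
have card_Xc := leq_trans card_Xmx_cyclic (leq_mul (leqnn _) (card_factor_rows F k)).
move: card_X card_Xc (card_SLmx_noncyclic F k.+1); rewrite expnS.
move: #|Xmx| (#|_ :&: _|) (#|_ :\: _|) #|GLmx_e0 F k.+1| (q ^ k)%N => X Xc Sn A Q.
case: q => [|r] /=; nia.
Qed.

Lemma card_Xmx_le : (#|Xmx| <= 4 * n.+1 * q ^ (n * n - 2))%N.
Proof.
have q_gt1 := card_finNzRing_gt1 F.
have Q_gt0 : (0 < q ^ k.+1)%N by rewrite expn_gt0 ltnW.
have qnn : (q ^ (n * n) = q ^ (n * n - 2) * q * q)%N.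
  by rewrite -!expnSr; congr expn; lia.
move: card_Xmx_mul_le (card_GLmx_e0_le F k.+1) Q_gt0; rewrite qnn (expnS q k.+1).
move: #|Xmx| #|GLmx_e0 F k.+1| (q ^ k.+1)%N (q ^ (n * n - 2))%N => X A Q W hX hA Q_gt0.
case: q q_gt1 hX hA => [|[|r]] //= _ hX hA.
have hXA : (X * r.+1 * (r.+2 * Q).-1 <= n.+1 * Q * (W * r.+2 * r.+2))%N.
  apply: leq_trans (leq_mul hX (leqnn _)) _.
  have := leq_mul (leqnn (n.+1 * Q)) hA; nia.
have two_q : (r.+2 <= 2 * r.+1)%N by lia.
have two_qQ : (r.+2 * Q <= 2 * (r.+2 * Q).-1)%N by nia.
have qQ_gt0 : (0 < r.+2 * Q * r.+2 * r.+2)%N by nia.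
have := leq_mul (leqnn X) (leq_mul two_q two_qQ).
rewrite -(leq_pmul2r qQ_gt0); nia.
Qed.

End Bound.

Lemma eventually_le_eps (R : archiFieldType) (S : pred nat) (C e : nat)
    (f : nat -> nat) (eps : R) :
  0 < eps -> {in S, forall p, (f p <= C * p ^ e)%N} ->
  exists P : nat, forall p, p \in S -> (P <= p)%N -> (f p)%:R <= eps * (p ^ e.+1)%:R.
Proof.
move=> eps_gt0 f_le; have Ceps_ge0 : 0 <= C%:R / eps by rewrite divr_ge0 ?ler0n ?ltW.
exists (Num.bound (C%:R / eps)) => p pS bound_le_p.
have lt_Ceps_p : C%:R / eps < p%:R.
  by apply: lt_le_trans (archi_boundP Ceps_ge0) _; rewrite ler_nat.
have f_le_R : (f p)%:R <= (C * p ^ e)%:R :> R by rewrite ler_nat f_le.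
rewrite expnS natrM mulrA; apply: le_trans f_le_R _; rewrite natrM ler_wpM2r //.
by move: lt_Ceps_p; rewrite ltr_pdivrMr // mulrC => /ltW.
Qed.

Theorem lemma6p1 (n : nat) (hn : (2 <= n)%N) (eps : rat) (heps : 0 < eps) :
  exists P : nat, forall p : nat, prime p -> (P <= p)%N ->
    (#|Xp n p|%:R : rat) <= eps * (p ^ (n ^ 2 - 1))%:R.
Proof.
case: n hn => [|[|k]] // _.
have -> : (k.+2 ^ 2 - 1 = (k.+2 * k.+2 - 2).+1)%N by rewrite mulnn; lia.
apply: (@eventually_le_eps _ prime (4 * k.+3) _ (fun p => #|Xp k.+2 p|) _ heps).
(* [Xp k.+2 p] unfolds to [Xmx 'F_p k]. *)
by move=> p p_prime; have := card_Xmx_le 'F_p k; rewrite card_Fp.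
Qed.
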